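(* Let $G$ be a group and let $V$ be a finite-dimensional vector space. Suppose that $\tau\in\mathrm{LNUCA}_c(G,V)$ is left-invertible. Then $\tau$ is stably injective.
   Context: For $g\in G$ and $x\in V^G$, $(gx)(h)=x(g^{-1}h)$. For $M\subset G$, a set $S$ of maps $V^M\to V$ and $s\in S^G$, the NUCA $\sigma_s\colon V^G\to V^G$ is $\sigma_s(x)(g)=s(g)((g^{-1}x)\vert_M)$; it has finite memory if $M$ is finite. $\mathrm{LNUCA}_c(G,V)$ is the set of $\sigma_s$ with $M$ finite, $s\in\mathcal{L}(V^M,V)^G$ constant outside some finite subset of $G$. $\tau$ is left-invertible if there is a NUCA $\sigma\colon V^G\to V^G$ with finite memory such that $\sigma\circ\tau=\mathrm{Id}$. For $s\in S^G$, $\Sigma(s)$ is the closure of $\{gs:g\in G\}$ in $S^G$ (prodiscrete topology); $\tau=\sigma_s$ is stably injective if $\sigma_p$ is injective for every $p\in\Sigma(s)$. *)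

From Stdlib Require List.
From mathcomp Require Import all_boot all_algebra.
Set Implicit Arguments.
Unset Strict Implicit.
Unset Printing Implicit Defensive.
Import GRing.Theory.
Local Open Scope ring_scope.

Record group_law (G : Type) := GroupLaw {
  gmul : G -> G -> G;
  gone : G;
  ginv : G -> G;
  gmulA : forall a b c, gmul a (gmul b c) = gmul (gmul a b) c;
  gmul1 : forall a, gmul gone a = a;
  gmulV : forall a, gmul (ginv a) a = gone }.

Section NUCA.
Variables (G : Type) (GL : group_law G).

Definition finite_subset (M : G -> Prop) : Prop :=
  exists l : list G, forall g, M g -> List.In g l.

Definition shift (T : Type) (g : G) (x : G -> T) : G -> T :=
  fun h => x (gmul GL (ginv GL g) h).

(* The NUCA sigma_s : V^G -> V^G with memory M and local rules s : G -> S,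
   S a set of maps V^M -> V:  sigma_s(x)(g) = s(g)((g^{-1} x)|_M). *)
Definition nuca (V : Type) (M : G -> Prop) (s : G -> ((sig M -> V) -> V))
  (x : G -> V) : G -> V :=
  fun g => s g (fun m : sig M => shift (ginv GL g) x (proj1_sig m)).

(* Sigma(s): p lies in the closure of the orbit {g s : g in G} for the
   prodiscrete topology, i.e. every finite window of p agrees with some g s. *)
Definition in_orbit_closure (T : Type) (s p : G -> T) : Prop :=
  forall E : G -> Prop, finite_subset E ->
    exists g : G, forall h, E h -> p h = shift g s h.

Definition asympt_const (T : Type) (s : G -> T) : Prop :=
  exists F : G -> Prop, finite_subset F /\
    exists t0 : T, forall g, ~ F g -> s g = t0.

Definition nuca_left_invertible (V : Type) (tau : (G -> V) -> (G -> V)) : Prop :=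
  exists N : G -> Prop, finite_subset N /\
    exists t : G -> ((sig N -> V) -> V), forall x, @nuca V N t (tau x) = x.

Definition stably_injective (V : Type) (M : G -> Prop)
  (S : ((sig M -> V) -> V) -> Prop) (s : G -> ((sig M -> V) -> V)) : Prop :=
  forall p : G -> ((sig M -> V) -> V),
    (forall g, S (p g)) -> in_orbit_closure s p -> injective (@nuca V M p).

End NUCA.

Arguments nuca {G} GL {V} M s x _.

Definition local_linear (K : fieldType) (V : vectType K) (I : Type)
  (f : (I -> V) -> V) : Prop :=
  forall (a : K) (x y : I -> V), f (fun i => a *: x i + y i) = a *: f x + f y.

From mathcomp Require Import all_boot all_algebra.
From Stdlib Require Import FunctionalExtensionality.

(* If [sigma] is a left inverse of [tau] with finite memory [N], then the value
   of [x] at [g] is read off [tau x] on the finite window [gN].  For [p] in the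
   orbit closure of [s], [p] coincides with some translate [k s] on [hN], and
   [sigma_(k s)] is conjugate to [tau] by the shift by [k]; so [sigma_p x] and
   [sigma_p y] determine the values of [x] and [y] at [h] in the same way. *)

Section GroupLaw.
Variables (G : Type) (GL : group_law G).

Lemma gmulVr a : gmul GL a (ginv GL a) = gone GL.
Proof.
set b := ginv GL a.
rewrite -[gmul GL a b](gmul1 GL) -{1}(gmulV GL b).
by rewrite -gmulA (gmulA GL b a b) (gmulV GL a) (gmul1 GL) gmulV.
Qed.

Lemma gmulr1 a : gmul GL a (gone GL) = a.
Proof. by rewrite -(gmulV GL a) gmulA gmulVr gmul1. Qed.

Lemma ginvK a : ginv GL (ginv GL a) = a.
Proof. by rewrite -[LHS]gmulr1 -(gmulV GL a) gmulA gmulV gmul1. Qed.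

Lemma gmulKV a b : gmul GL (ginv GL a) (gmul GL a b) = b.
Proof. by rewrite gmulA gmulV gmul1. Qed.

Lemma gmulVK a b : gmul GL a (gmul GL (ginv GL a) b) = b.
Proof. by rewrite gmulA gmulVr gmul1. Qed.

Lemma finite_subset_image {I : G -> Prop} (f : G -> G) :
  finite_subset I -> finite_subset (fun h => exists i : sig I, h = f (proj1_sig i)).
Proof.
move=> [l Il]; exists (List.map f l) => _ [i ->].
exact/List.in_map/Il/(proj2_sig i).
Qed.

Lemma shift_mul {T : Type} (x : G -> T) a h : shift GL a x (gmul GL a h) = x h.
Proof. by rewrite /shift gmulKV. Qed.

Section Nuca.
Variables (V : Type) (M : G -> Prop).
Implicit Types (s p : G -> (sig M -> V) -> V) (x y : G -> V).

Lemma nuca_local {s p g} : s g = p g -> forall x, nuca GL M s x g = nuca GL M p x g.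
Proof. by rewrite /nuca => ->. Qed.

Lemma nuca_shift s x k g :
  nuca GL M (shift GL k s) x g =
  nuca GL M s (shift GL (ginv GL k) x) (gmul GL (ginv GL k) g).
Proof.
rewrite /nuca /shift; congr (s _ _); apply: functional_extensionality => m.
by rewrite !ginvK -gmulA gmulVK.
Qed.

Lemma left_inverse_window {N : G -> Prop} {t : G -> (sig N -> V) -> V}
    {tau : (G -> V) -> G -> V} :
  (forall x, nuca GL N t (tau x) = x) ->
  forall x y g, (forall m : sig N, tau x (gmul GL g (proj1_sig m)) =
                                   tau y (gmul GL g (proj1_sig m))) ->
  x g = y g.
Proof.
move=> tK x y g xy; rewrite -(tK x) -(tK y) /nuca /shift ginvK.
by congr (t g _); apply: functional_extensionality => m; apply: xy.
Qed.

Lemma left_invertible_stably_injective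
    (S : ((sig M -> V) -> V) -> Prop) s :
  nuca_left_invertible GL (nuca GL M s) -> stably_injective GL S s.
Proof.
move=> [N [finN [t tK]]] p _ p_cl x y pxy; apply: functional_extensionality => h.
have [k pks] := p_cl _ (finite_subset_image (gmul GL h) finN).
rewrite -(shift_mul x (ginv GL k)) -(shift_mul y (ginv GL k)).
apply: (left_inverse_window tK) => m.
have p_hm := pks _ (ex_intro _ m erefl).
by rewrite -gmulA -(nuca_shift s x) -(nuca_shift s y) -!(nuca_local p_hm) pxy.
Qed.

End Nuca.
End GroupLaw.

Theorem theorem4p3 (G : Type) (GL : group_law G) (K : fieldType) (V : vectType K)
  (M : G -> Prop) (s : G -> ((sig M -> V) -> V)) :
  finite_subset M ->
  (forall g, local_linear (s g)) ->
  asympt_const s ->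
  nuca_left_invertible GL (nuca GL M s) ->
  stably_injective GL (fun f => local_linear f) s.
Proof. by move=> _ _ _; apply: left_invertible_stably_injective. Qed.
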